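(* Let $n\ge 3$, $n\neq 4$, and let $\Gamma$ be the graph with vertex set $\{u_i,v_i: i\in\mathbb Z_n\}$ in which $u_i$ and $v_i$ both have neighbourhood $\{u_{i-1},u_{i+1},v_{i-1},v_{i+1}\}$ (this is the Rose Window graph $R_n(2,1)$ with $u_i=x_i$, $v_i=y_{i-1}$). For $i\in\mathbb Z_n$ let $\sigma_i$ be the automorphism interchanging $u_i$ and $v_i$ and fixing all other vertices, and let $N=\langle\sigma_0,\ldots,\sigma_{n-1}\rangle$; denote $\prod_{j}\sigma_j^{i_j}\in N$ ($i_j\in\{0,1\}$) by the tuple $(i_0,i_1,\ldots,i_{n-1})$. Let $\mathcal M$ be a map of class $2_{\{0,1\}}$ with underlying graph $\Gamma$ and let $T=N\cap\mathrm{Aut}(\mathcal M)$. Then either $T=\{(0,0,\ldots,0),(0,1,1,0,1,1,\ldots,0,1,1),(1,0,1,1,0,1,\ldots,1,0,1),(1,1,0,1,1,0,\ldots,1,1,0)\}$, in which case $3\mid n$, or $T=\{(0,0,\ldots,0),(0,1,0,1,\ldots,0,1),(1,0,1,0,\ldots,1,0),(1,1,\ldots,1)\}$, in which case $2\mid n$. In particular, $\gcd(n,6)\neq 1$.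
   Context: A map is a $2$-cell embedding of a connected simple graph (its underlying graph) in a closed surface; the components of the complement are the faces. All maps considered are polytopal: flags correspond bijectively to incident triples (vertex, edge, face). For a flag $\Phi$ and $i\in\{0,1,2\}$, $\Phi^i$ is the unique flag differing from $\Phi$ exactly in its vertex ($i=0$), edge ($i=1$) or face ($i=2$). $\mathrm{Aut}(\mathcal M)$ is the group of automorphisms of the underlying graph preserving the set of faces, acting on flags. A map is in class $2_{\{0,1\}}$ if $\mathrm{Aut}(\mathcal M)$ has exactly two orbits on flags and for every flag $\Phi$, the flags $\Phi^0,\Phi^1$ lie in the orbit of $\Phi$ while $\Phi^2$ does not. *)

From mathcomp Require Import all_boot all_fingroup.
Set Implicit Arguments. Unset Strict Implicit. Unset Printing Implicit Defensive.

Section RoseWindow.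
Variable n : nat.

(* Vertices: (false, i) = u_i, (true, i) = v_i, i in Z_n. *)
Definition RV := (bool * 'I_n)%type.

Definition radj (x y : RV) : bool :=
  ((val x.2).+1 %% n == val y.2) || ((val y.2).+1 %% n == val x.2).

Definition redges : {set {set RV}} :=
  [set [set p.1; p.2] | p in [set p : RV * RV | radj p.1 p.2]].

(* A face is a simple cycle of Gamma, given by its (nonempty) edge set:
   every vertex meets 0 or 2 of its edges, and it is connected. *)
Definition face_conn (f : {set {set RV}}) : rel {set RV} :=
  fun a b => [&& a \in f, b \in f & a :&: b != set0].

Definition is_cycle (f : {set {set RV}}) : Prop :=
  [/\ f \subset redges, f != set0,
      (forall x : RV, #|[set e in f | x \in e]| \in [:: 0; 2]) &
      (forall a b, a \in f -> b \in f -> connect (face_conn f) a b)].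

Definition link_rel (F : {set {set {set RV}}}) (x : RV) : rel {set RV} :=
  fun a b => [&& a \in redges, b \in redges, x \in a, x \in b &
                 [exists f in F, (a \in f) && (b \in f)]].

(* A polytopal map with underlying graph Gamma, given by its set of faces
   (each face a simple cycle of Gamma): every edge lies on exactly two faces
   and the faces around each vertex form a single cycle (so the result of
   gluing discs along the faces is a closed surface). *)
Definition is_map (F : {set {set {set RV}}}) : Prop :=
  [/\ (forall f, f \in F -> is_cycle f),
      (forall e, e \in redges -> #|[set f in F | e \in f]| = 2) &
      (forall x a b, a \in redges -> b \in redges -> x \in a -> x \in b ->
          connect (link_rel F x) a b)].

Definition face_img (g : {perm RV}) (f : {set {set RV}}) : {set {set RV}} :=
  (fun a : {set RV} => g @: a) @: f.

Definition Aut (F : {set {set {set RV}}}) : {set {perm RV}} :=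
  [set g : {perm RV} | [forall x, forall y, radj (g x) (g y) == radj x y] &&
                      [forall f in F, face_img g f \in F]].

Definition flag := (RV * {set RV} * {set {set RV}})%type.

Definition is_flag (F : {set {set {set RV}}}) (p : flag) : Prop :=
  [/\ p.1.1 \in p.1.2, p.1.2 \in redges, p.2 \in F & p.1.2 \in p.2].

Definition flag_act (g : {perm RV}) (p : flag) : flag :=
  (g p.1.1, g @: p.1.2, face_img g p.2).

Definition same_orbit (F : {set {set {set RV}}}) (p q : flag) : Prop :=
  exists2 g, g \in Aut F & flag_act g p = q.

(* q = p^0, p^1, p^2 respectively (q is the unique flag differing from p
   exactly in its vertex / edge / face). *)
Definition diff0 (p q : flag) := [/\ p.1.1 != q.1.1, p.1.2 = q.1.2 & p.2 = q.2].
Definition diff1 (p q : flag) := [/\ p.1.1 = q.1.1, p.1.2 != q.1.2 & p.2 = q.2].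
Definition diff2 (p q : flag) := [/\ p.1.1 = q.1.1, p.1.2 = q.1.2 & p.2 != q.2].

Definition class2_01 (F : {set {set {set RV}}}) : Prop :=
  [/\ (exists p1 p2, [/\ is_flag F p1, is_flag F p2, ~ same_orbit F p1 p2 &
        forall q, is_flag F q -> same_orbit F p1 q \/ same_orbit F p2 q]),
      (forall p q, is_flag F p -> is_flag F q -> diff0 p q -> same_orbit F p q),
      (forall p q, is_flag F p -> is_flag F q -> diff1 p q -> same_orbit F p q) &
      (forall p q, is_flag F p -> is_flag F q -> diff2 p q -> ~ same_orbit F p q)].

Definition sigma (i : 'I_n) : {perm RV} := tperm (false, i) (true, i).

Definition Ngrp : {set {perm RV}} := <<[set sigma i | i : 'I_n]>>%g.

Definition tuple_elt (c : 'I_n -> bool) : {perm RV} :=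
  (\prod_(j < n) (if c j then sigma j else 1))%g.

Definition Tgrp (F : {set {set {set RV}}}) : {set {perm RV}} := Ngrp :&: Aut F.

End RoseWindow.

From Pilot Require Import Defs.
From mathcomp Require Import all_boot all_fingroup zify.
Set Implicit Arguments. Unset Strict Implicit. Unset Printing Implicit Defensive.

(* Automorphisms of Gamma preserve the fibres {u_i, v_i} (for n <> 4 these are the classes
   of vertices with equal neighbourhoods), so each one induces an automorphism of the
   n-cycle, and N consists of those inducing the identity; an element of N is recorded by
   the set of fibres it swaps.  Since the link of every vertex of the map is connected, an
   automorphism fixing a flag is trivial.  Flags differing only in their face lie in
   different orbits; hence an element of T fixing u_k and u_(k+1) is trivial, while for
   every k some element of T fixes u_k and swaps u_(k+1).  So T has order 4, its elements
   being determined by their action on two consecutive fibres.  Flags differing only in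
   their vertex lie in the same orbit, which yields automorphisms reflecting the cycle in
   any of its edges; conjugating by them shows that whether some non-trivial element of T
   fixes both u_k and u_(k+2) does not depend on k.  If so, the non-trivial elements of T
   fix every other fibre and n is even; if not, they fix every third fibre and 3 | n. *)

Lemma imset_perm1 (T : finType) (A : {set T}) : (1 : {perm T})%g @: A = A.
Proof. exact: (act1 'P^* A). Qed.

Lemma imset_permM (T : finType) (g h : {perm T}) (A : {set T}) :
  (g * h)%g @: A = h @: (g @: A).
Proof. exact: (actM 'P^* A g h). Qed.

Section RoseWindowMaps.
Variable n : nat.
Hypothesis n_gt2 : 2 < n.
Hypothesis n_neq4 : n != 4.
Implicit Types (x y : RV n) (e : {set RV n}) (f : {set {set RV n}}).
Implicit Types (g t : {perm RV n}) (p q : flag n).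

Definition inZn (k : nat) : 'I_n := Ordinal (ltn_pmod k (ltnW (ltnW n_gt2))).

Lemma inZn_ord (i : 'I_n) : inZn i = i.
Proof. by apply/val_inj; rewrite /= modn_small. Qed.

Lemma inZnDn k : inZn (k + n) = inZn k.
Proof. by apply/val_inj; rewrite /= modnDr. Qed.

Lemma eq_inZnD k c : (inZn (k + c) == inZn k) = (n %| c).
Proof. by rewrite -val_eqE /= -{2}[k]addn0 eqn_modDl mod0n. Qed.

Lemma inZnD1_neq k : inZn (k + 1) != inZn k.
Proof. by rewrite eq_inZnD dvdn1; lia. Qed.

Lemma inZnD2_neq k : inZn (k + 2) != inZn k.
Proof.
by rewrite eq_inZnD; apply: contraTN n_gt2 => /(dvdn_leq (isT : 0 < 2)); rewrite -leqNgt.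
Qed.

Lemma inZnD4_neq k : inZn (k + 4) != inZn k.
Proof.
rewrite eq_inZnD; apply/negP => /[dup] /(dvdn_leq (isT : 0 < 4)) n_le4.
by have -> : n = 3 by lia.
Qed.

Lemma inZn_reach k (j : 'I_n) : exists m, inZn (k + m) = j.
Proof.
exists (j + (n - k %% n)); apply/val_inj => /=.
have k_lt_n := ltn_pmod k (ltnW (ltnW n_gt2)).
rewrite {1}(divn_eq k n) (_ : _ + _ = k %/ n * n + (n + j)); last by lia.
by rewrite modnMDl modnDl modn_small.
Qed.

Definition cadj (i j : 'I_n) : bool := (i.+1 %% n == j) || (j.+1 %% n == i).

Lemma cadjC i j : cadj i j = cadj j i.
Proof. by rewrite /cadj orbC. Qed.

Lemma cadj_succ k : cadj (inZn k) (inZn (k + 1)).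
Proof. by rewrite /cadj /= -addn1 modnDml eqxx. Qed.

Lemma cadj_succE k m : cadj (inZn (k + 1)) m = (m == inZn k) || (m == inZn (k + 2)).
Proof.
rewrite /cadj orbC -!val_eqE /= -[m.+1]addn1 eqn_modDr modn_small //.
rewrite -[_.+1]addn1 modnDml -addnA.
by rewrite (eq_sym _ (m : nat)).
Qed.

(* This fails for n = 4, where i and i + 2 have the same neighbours. *)
Lemma cadj_nbhd_inj j k : (forall m, cadj j m = cadj k m) -> j = k.
Proof.
have [a <-] : exists a, inZn (a + 1) = j.
  by have [a <-] := inZn_reach 1 j; exists a; rewrite addnC.
move=> Njk; have k_a0 : cadj k (inZn a) by rewrite -Njk cadj_succE eqxx.
have : cadj k (inZn (a + 1 + 1)) by rewrite -Njk cadj_succE -addnA eqxx orbT.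
rewrite cadjC cadj_succE => /orP[/eqP -> // | /eqP Ek].
move: k_a0; rewrite Ek -addnA (addnC 1) addnA cadj_succE -addnA.
by rewrite !(eq_sym (inZn a)) (negbTE (inZnD2_neq a)) (negbTE (inZnD4_neq a)).
Qed.

(* For t in N, [swaps t k] is the k-th coordinate of t in the tuple notation
   (u_k is (false, k) and v_k is (true, k)). *)
Definition swaps (t : {perm RV n}) (k : nat) : bool := t (false, inZn k) != (false, inZn k).

Lemma swaps_ord t (j : 'I_n) : swaps t j = (t (false, j) != (false, j)).
Proof. by rewrite /swaps inZn_ord. Qed.

Lemma swaps_inZn t k : swaps t (inZn k) = swaps t k.
Proof. by rewrite swaps_ord. Qed.

Lemma swapsDn t k : swaps t (k + n) = swaps t k.
Proof. by rewrite /swaps inZnDn. Qed.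

Lemma swaps1 k : swaps 1 k = false.
Proof. by rewrite /swaps perm1 eqxx. Qed.

Lemma swaps_neq1 t k : swaps t k -> t != 1%g.
Proof. by apply: contraTneq => ->; rewrite swaps1. Qed.

Lemma fibre_permE t : (forall x, (t x).2 = x.2) ->
  forall b j, t (b, j) = (swaps t j (+) b, j).
Proof.
move=> t_fibre b j; rewrite swaps_ord.
have tE c : t (c, j) = ((t (c, j)).1, j).
  by move: (t_fibre (c, j)); case: (t _) => ? ? /= ->.
have : t (false, j) != t (true, j) by rewrite (inj_eq perm_inj).
rewrite [t (b, j)]tE (tE false) (tE true) !xpair_eqE !eqxx !andbT.
by case: b; case: (t (false, j)).1; case: (t (true, j)).1.
Qed.

Lemma prod_sigma_seqE (c : 'I_n -> bool) (r : seq 'I_n) b j : uniq r ->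
  (\prod_(i <- r) (if c i then sigma i else 1))%g (b, j) = ((c j && (j \in r)) (+) b, j).
Proof.
elim: r b => [|i r IHr] b /=; first by rewrite big_nil perm1 andbF.
case/andP=> i_r r_uniq; rewrite big_cons permM.
have -> : (if c i then sigma i else 1)%g (b, j) = ((c i && (i == j)) (+) b, j).
  case: (c i); last by rewrite perm1.
  rewrite /sigma; have [<-|ij] := eqVneq i j; first by case: b; rewrite ?tpermL ?tpermR.
  by rewrite tpermD // xpair_eqE (negbTE ij) andbF.
rewrite IHr // inE; have [<-|_] := eqVneq i j; last by rewrite andbF.
by rewrite (negbTE i_r) andbF andbT.
Qed.

Lemma tuple_eltE (c : 'I_n -> bool) b j : tuple_elt c (b, j) = (c j (+) b, j).
Proof. by rewrite /tuple_elt prod_sigma_seqE ?index_enum_uniq // mem_index_enum andbT. Qed.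

Lemma tuple_elt_Ngrp (c : 'I_n -> bool) : tuple_elt c \in Ngrp n.
Proof.
apply: group_prod => i _; case: (c i); last exact: group1.
exact/mem_gen/imset_f.
Qed.

Lemma NgrpP t : reflect (forall x, (t x).2 = x.2) (t \in Ngrp n).
Proof.
apply: (iffP idP) => [t_N | t_fibre]; last first.
  suff -> : t = tuple_elt (swaps t) by apply: tuple_elt_Ngrp.
  by apply/permP => -[b j]; rewrite tuple_eltE fibre_permE.
have fibre_group : group_set [set s : {perm RV n} | [forall x, (s x).2 == x.2]].
  apply/group_setP; split=> [|s s' /[!inE] /forallP s_fib /forallP s'_fib].
    by rewrite inE; apply/forallP => x; rewrite perm1.
  by apply/forallP => x; rewrite permM (eqP (s'_fib _)) (eqP (s_fib _)).
have : Ngrp n \subset Group fibre_group.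
  rewrite gen_subG; apply/subsetP => _ /imsetP[i _ ->]; rewrite inE.
  by apply/forallP => x; rewrite /sigma; case: tpermP => [->|->|].
by move/subsetP/(_ t t_N); rewrite inE => /forallP t_fib x; apply/eqP.
Qed.

Lemma NgrpE t b j : t \in Ngrp n -> t (b, j) = (swaps t j (+) b, j).
Proof. by move/NgrpP/fibre_permE. Qed.

Lemma swapsM (t1 t2 : {perm RV n}) k : t1 \in Ngrp n -> t2 \in Ngrp n ->
  swaps (t1 * t2)%g k = swaps t1 k (+) swaps t2 k.
Proof.
move=> t1_N t2_N; rewrite {1}/swaps permM NgrpE // NgrpE // xpair_eqE eqxx andbT.
by rewrite !swaps_inZn addbF addbC; case: (_ (+) _).
Qed.

Lemma tuple_elt_swaps (c : 'I_n -> bool) t : t \in Ngrp n ->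
  (forall j : 'I_n, swaps t j = c j) -> tuple_elt c = t.
Proof. by move=> t_N tc; apply/permP => -[b j]; rewrite tuple_eltE NgrpE // tc. Qed.

Lemma Ngrp_swaps_inj (t1 t2 : {perm RV n}) : t1 \in Ngrp n -> t2 \in Ngrp n ->
  (forall k, swaps t1 k = swaps t2 k) -> t1 = t2.
Proof.
move=> t1_N t2_N t12; rewrite -(tuple_elt_swaps (c := fun j => swaps t1 j) t1_N) //.
by apply: tuple_elt_swaps t2_N _ => j; rewrite t12.
Qed.

Section Maps.
Variable F : {set {set {set RV n}}}.
(* Plain [Aut] would denote the automorphism group of fingroup. *)
Local Notation AutF := (Defs.Aut F).

Lemma aut_adj g x y : g \in AutF -> radj (g x) (g y) = radj x y.
Proof. by rewrite inE => /andP[/forallP/(_ x)/forallP/(_ y)/eqP]. Qed.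

Lemma aut_face g f : g \in AutF -> f \in F -> face_img g f \in F.
Proof. by rewrite inE => /andP[_ /forallP/(_ f)/implyP]. Qed.

Lemma face_imgE g f : face_img g f = setact ('P^*) f g.
Proof. by []. Qed.

Lemma face_img1 f : face_img 1 f = f.
Proof. by rewrite face_imgE act1. Qed.

Lemma face_imgM g (h : {perm RV n}) f : face_img (g * h) f = face_img h (face_img g f).
Proof. by rewrite !face_imgE actM. Qed.

Lemma face_img_inj g : injective (face_img g).
Proof. exact: (act_inj ('P^*)^* g). Qed.

Lemma Aut_group_set : group_set AutF.
Proof.
apply/group_setP; split=> [|g h Ag Ah]; rewrite inE; apply/andP; split.
- by apply/forallP => x; apply/forallP => y; rewrite !perm1.
- by apply/forallP => f; rewrite face_img1; apply/implyP.
- by apply/forallP => x; apply/forallP => y; rewrite !permM !aut_adj.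
- by apply/forallP => f; apply/implyP => fF; rewrite face_imgM !aut_face.
Qed.

Canonical Aut_group := Group Aut_group_set.

Lemma flag_act1 p : flag_act 1%g p = p.
Proof. by case: p => [[x e] f]; rewrite /flag_act /= perm1 face_img1 imset_perm1. Qed.

Lemma flag_actM g (h : {perm RV n}) p : flag_act (g * h)%g p = flag_act h (flag_act g p).
Proof. by rewrite /flag_act /= permM face_imgM imset_permM. Qed.

Lemma same_orbit_sym p q : same_orbit F p q -> same_orbit F q p.
Proof. by case=> g Ag <-; exists g^-1%g; rewrite ?groupV // -flag_actM mulgV flag_act1. Qed.

Lemma same_orbit_trans p q r : same_orbit F p q -> same_orbit F q r -> same_orbit F p r.
Proof. by case=> g Ag <- [h Ah <-]; exists (g * h)%g; rewrite ?groupM // flag_actM. Qed.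

Lemma radjE x y : radj x y = cadj x.2 y.2.
Proof. by []. Qed.

Lemma radj_irr x : radj x x = false.
Proof.
apply/negbTE; rewrite radjE /cadj orbb; have := inZnD1_neq x.2.
by rewrite -val_eqE /= addn1 (modn_small (ltn_ord _)).
Qed.

Lemma redgesP e :
  e \in redges n -> exists x y, [/\ radj x y, x != y & e = [set x; y]].
Proof.
case/imsetP => -[x y]; rewrite inE /= => xy ->; exists x, y; split=> //.
by apply: contraTneq xy => ->; rewrite radj_irr.
Qed.

Lemma redges_adj x y : radj x y -> [set x; y] \in redges n.
Proof. by move=> xy; apply/imsetP; exists (x, y); rewrite ?inE. Qed.

Lemma card2_mem (T : finType) (S : {set T}) a b c :
  #|S| = 2 -> a \in S -> b \in S -> a != b -> c \in S -> c = a \/ c = b.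
Proof.
move=> S2 aS bS ab; suff <- : [set a; b] = S by rewrite !inE => /orP[] /eqP; [left | right].
apply/eqP; rewrite eqEcard cards2 ab S2 leqnn andbT.
by apply/subsetP => z; rewrite !inE => /orP[] /eqP->.
Qed.

Hypothesis mapF : is_map F.

Lemma edge_faces e : e \in redges n ->
  exists f1 f2, [/\ f1 != f2, f1 \in F, f2 \in F, e \in f1 & e \in f2].
Proof.
case: mapF => _ faces2 _ /faces2/eqP/cards2P[f1 [f2 [f12 E]]].
have : f1 \in [set f in F | e \in f] by rewrite E !inE eqxx.
have : f2 \in [set f in F | e \in f] by rewrite E !inE eqxx orbT.
by rewrite !inE => /andP[? ?] /andP[? ?]; exists f1, f2.
Qed.

Lemma edge_flag x e : x \in e -> e \in redges n -> exists f, is_flag F (x, e, f).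
Proof. by move=> xe ee; have [f [_ [_ fF _ ef _]]] := edge_faces ee; exists f. Qed.

Lemma face_vertex_edges f x (a c d : {set RV n}) :
  f \in F -> a \in f -> c \in f -> d \in f -> x \in a -> x \in c -> x \in d -> a != c ->
  d = a \/ d = c.
Proof.
case: mapF => cycF _ _ fF af cf df xa xc xd ac.
case: (cycF f fF) => _ _ /(_ x) deg_x _.
have inS e : e \in f -> x \in e -> e \in [set e in f | x \in e] by rewrite inE => -> ->.
apply: card2_mem (inS _ af xa) (inS _ cf xc) ac (inS _ df xd).
move: deg_x; rewrite !inE => /orP[/eqP/cards0_eq S0 | /eqP //].
by move: (inS _ af xa); rewrite S0 inE.
Qed.

(* An edge lies on two faces and a face has two edges at each of its vertices, so an
   automorphism fixing one of them fixes the other. *)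
Lemma fixed_flag_link t x a c f : t \in AutF -> is_flag F (x, a, f) ->
  flag_act t (x, a, f) = (x, a, f) -> link_rel F x a c ->
  exists h, is_flag F (x, c, h) /\ flag_act t (x, c, h) = (x, c, h).
Proof.
move=> At [xa ae fF af] [tx ta tf] /and5P[_ ce _ xc /existsP[h /and3P[hF ah ch]]].
have th : face_img t h = h.
  have [-> //|hf] := eqVneq h f.
  have inS h' : h' \in F -> a \in h' -> h' \in [set h' in F | a \in h'].
    by rewrite inE => -> ->.
  have a_th : a \in face_img t h by rewrite -ta imset_f.
  have fh : f != h by rewrite eq_sym.
  case: mapF => _ /(_ a ae) faces2 _.
  have := card2_mem faces2 (inS _ fF af) (inS _ hF ah) fh (inS _ (aut_face At hF) a_th).
  case=> [|//].
  by rewrite -tf => /face_img_inj hf'; rewrite hf' eqxx in hf.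
have tc : t @: c = c.
  have [<- //|ac] := eqVneq a c.
  have tc_h : t @: c \in h by rewrite -th imset_f.
  have x_tc : x \in t @: c by rewrite -tx imset_f.
  case: (face_vertex_edges hF ah ch tc_h xa xc x_tc ac) => [|//].
  by rewrite -ta => /(imset_inj perm_inj) ca; rewrite ca eqxx in ac.
by exists h; rewrite /flag_act /= tx tc th.
Qed.

Lemma fixed_flag_edge t x a f e : t \in AutF -> is_flag F (x, a, f) ->
  flag_act t (x, a, f) = (x, a, f) -> e \in redges n -> x \in e ->
  exists h, is_flag F (x, e, h) /\ flag_act t (x, e, h) = (x, e, h).
Proof.
move=> At fl tfl ee xe; have [xa ae _ _] := fl.
case: mapF => _ _ /(_ x a e ae ee xa xe) /connectP[s].
elim: s a f fl tfl {xa ae} => [|c s IHs] a f fl tfl /=; first by move=> _ ->; exists f.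
case/andP=> a_c c_s; have [h [hfl thfl]] := fixed_flag_link At fl tfl a_c.
exact: IHs hfl thfl c_s.
Qed.

Definition fixes_flag_at t x :=
  exists e f, is_flag F (x, e, f) /\ flag_act t (x, e, f) = (x, e, f).

Lemma fixes_flag_at_adj t x y : t \in AutF -> fixes_flag_at t x -> radj x y ->
  fixes_flag_at t y.
Proof.
move=> At [a [f [fl tfl]]] xy.
have xe : x \in [set x; y] by rewrite !inE eqxx.
have [h [[_ ee hF eh] [tx te th]]] := fixed_flag_edge At fl tfl (redges_adj xy) xe.
have ty : t y = y.
  have : t y \in [set x; y] by rewrite -te imset_f // !inE eqxx orbT.
  rewrite !inE => /orP[/eqP tyx | /eqP //].
  by move: xy; rewrite -tx in tyx; rewrite (perm_inj tyx) radj_irr.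
exists [set x; y], h; split; last by rewrite /flag_act /= ty te th.
by split; rewrite // !inE eqxx orbT.
Qed.

Lemma fixes_flag_at_trivial t x : t \in AutF -> fixes_flag_at t x -> t = 1%g.
Proof.
move=> At tx.
have t_fix m b : fixes_flag_at t (b, inZn (x.2 + 1 + m)).
  elim: m b => [|m IHm] b.
    by apply: fixes_flag_at_adj At tx _; have := cadj_succ x.2; rewrite inZn_ord addn0.
  by apply: fixes_flag_at_adj At (IHm false) _; rewrite -(addn1 m) addnA; apply: cadj_succ.
apply/permP => -[b j]; have [m <-] := inZn_reach (x.2 + 1) j.
by have [e [f [_ [-> _ _]]]] := t_fix m b; rewrite perm1.
Qed.

Lemma aut_fibre g x y : g \in AutF -> x.2 = y.2 -> (g x).2 = (g y).2.
Proof.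
move=> Ag xy; apply: cadj_nbhd_inj => m.
have gE z : cadj (g z).2 m = radj z (g^-1%g (false, m)) by rewrite -(aut_adj _ _ Ag) permKV.
by rewrite !gE !radjE xy.
Qed.

(* By aut_fibre, g maps the fibre of j onto the fibre of blk g j. *)
Definition blk g (j : 'I_n) : 'I_n := (g (false, j)).2.

Lemma aut_blkE g b j : g \in AutF -> (g (b, j)).2 = blk g j.
Proof. by move=> Ag; apply: aut_fibre. Qed.

Lemma blk_inj g : g \in AutF -> injective (blk g).
Proof. by move=> Ag i j /(aut_fibre (groupVr Ag)); rewrite !permK. Qed.

Lemma blk_adj g i j : g \in AutF -> cadj (blk g i) (blk g j) = cadj i j.
Proof. exact: aut_adj. Qed.

Lemma blk_nbrs g k i : g \in AutF -> blk g (inZn (k + 1)) = inZn (i + 1) ->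
  blk g (inZn k) = inZn i /\ blk g (inZn (k + 2)) = inZn (i + 2) \/
  blk g (inZn k) = inZn (i + 2) /\ blk g (inZn (k + 2)) = inZn i.
Proof.
move=> Ag gk1.
have nbr j : cadj (inZn (k + 1)) j -> blk g j = inZn i \/ blk g j = inZn (i + 2).
  by rewrite -(blk_adj _ _ Ag) gk1 cadj_succE => /orP[] /eqP; [left | right].
have k_k2 : blk g (inZn (k + 2)) != blk g (inZn k).
  by rewrite (inj_eq (blk_inj Ag)) inZnD2_neq.
have [kE | kE] : blk g (inZn k) = inZn i \/ blk g (inZn k) = inZn (i + 2).
  by apply: nbr; rewrite cadj_succE eqxx.
all: have [k2E | k2E] : blk g (inZn (k + 2)) = inZn i \/ blk g (inZn (k + 2)) = inZn (i + 2)
  by apply: nbr; rewrite cadj_succE eqxx orbT.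
all: rewrite kE k2E ?eqxx in k_k2 *; by [left | right].
Qed.

Lemma blk_fix2 g k : g \in AutF -> blk g (inZn k) = inZn k ->
  blk g (inZn (k + 1)) = inZn (k + 1) -> forall j, blk g j = j.
Proof.
move=> Ag gk gk1.
have fix_km m :
    blk g (inZn (k + m)) = inZn (k + m) /\ blk g (inZn (k + m + 1)) = inZn (k + m + 1).
  elim: m => [|m [gkm gkm1]]; first by rewrite addn0.
  rewrite addnS -(addn1 (k + m)); split=> //.
  case: (blk_nbrs Ag gkm1) => [[_ gkm2] | [gkm' _]]; first by rewrite -addnA.
  by move: (inZnD2_neq (k + m)); rewrite -gkm' gkm eqxx.
by move=> j; have [m <-] := inZn_reach k j; case: (fix_km m).
Qed.

Lemma TgrpP t : reflect (t \in Ngrp n /\ t \in AutF) (t \in Tgrp F).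
Proof. exact: setIP. Qed.

Lemma Ngrp_conj t g : t \in Ngrp n -> g \in AutF -> (t ^ g)%g \in Ngrp n.
Proof.
move=> tN Ag; apply/NgrpP => x; rewrite conjgE !permM -[in RHS](permKV g x).
by apply: aut_fibre Ag _; apply/NgrpP.
Qed.

Lemma Tgrp_conj t g : t \in Tgrp F -> g \in AutF -> (t ^ g)%g \in Tgrp F.
Proof. by case/TgrpP => tN At Ag; apply/TgrpP; rewrite Ngrp_conj ?groupJ. Qed.

Lemma swaps_conj t g k : t \in Ngrp n -> g \in AutF ->
  swaps (t ^ g^-1)%g k = swaps t (blk g (inZn k)).
Proof.
move=> tN Ag; rewrite {1}/swaps conjgE invgK !permM -(inj_eq (@perm_inj _ g)) permKV.
rewrite [g (false, _)]surjective_pairing NgrpE // xpair_eqE eqxx andbT -/(blk g (inZn k)).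
by case: (g _).1; case: (swaps _ _).
Qed.

Lemma is_flag_act g p : g \in AutF -> is_flag F p -> is_flag F (flag_act g p).
Proof.
case: p => [[x e] f] Ag [/= xe ee fF ef]; split; rewrite /= ?imset_f ?aut_face //.
by have [y [z [yz _ ->]]] := redgesP ee; rewrite imsetU1 imset_set1 redges_adj ?aut_adj.
Qed.

Hypothesis classF : class2_01 F.

Lemma two_orbits p q1 q2 : is_flag F p -> is_flag F q1 -> is_flag F q2 ->
  ~ same_orbit F q1 q2 -> same_orbit F p q1 \/ same_orbit F p q2.
Proof.
case: classF => [[p1 [p2 [_ _ _ orbits]]] _ _ _] fp fq1 fq2 q12.
have [p_ | p_] := orbits p fp; have [q1_ | q1_] := orbits q1 fq1;
  have [q2_ | q2_] := orbits q2 fq2;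
  try by case: q12; apply: same_orbit_trans (same_orbit_sym q1_) q2_.
all: have p_q := same_orbit_trans (same_orbit_sym p_).
all: by [left; apply: p_q | right; apply: p_q].
Qed.

Lemma Tgrp_swaps_succ k : exists2 t, t \in Tgrp F & ~~ swaps t k && swaps t (k + 1).
Proof.
set x : RV n := (false, inZn k).
set y : RV n := (false, inZn (k + 1)); set y' : RV n := (true, inZn (k + 1)).
have e'E : [set x; y'] \in redges n by apply: redges_adj; apply: cadj_succ.
have [f fl] := edge_flag (setU11 x [set y]) (redges_adj (cadj_succ k : radj x y)).
have [f1 [f2 [f12 f1F f2F e'f1 e'f2]]] := edge_faces e'E.
have fl1 : is_flag F (x, [set x; y'], f1) by split; rewrite ?setU11.
have fl2 : is_flag F (x, [set x; y'], f2) by split; rewrite ?setU11.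
have not12 : ~ same_orbit F (x, [set x; y'], f1) (x, [set x; y'], f2).
  by case: classF => _ _ _; apply.
(* The two flags at u_k on the edge {u_k, v_(k+1)} represent both orbits, and an
   automorphism taking (u_k, {u_k, u_(k+1)}, f) to one of them fixes all fibres. *)
suff orbit_swaps q : same_orbit F (x, [set x; y], f) q -> q.1 = (x, [set x; y']) ->
    exists2 t, t \in Tgrp F & ~~ swaps t k && swaps t (k + 1).
  by case: (two_orbits fl fl1 fl2 not12) => /orbit_swaps; apply.
case=> g Ag <- [gx ge].
have gy : g y = y'.
  have : g y \in [set x; y'] by rewrite -ge imset_f // !inE eqxx orbT.
  rewrite !inE => /orP[/eqP gyx | /eqP //].
  have x_y : x != y by rewrite xpair_eqE eqxx eq_sym inZnD1_neq.
  by move: x_y; rewrite -(inj_eq (@perm_inj _ g)) gx gyx eqxx.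
have g_blk : forall j, blk g j = j.
  by apply: (blk_fix2 (k := k)); rewrite // /blk -/x -/y ?gx ?gy.
have gN : g \in Ngrp n by apply/NgrpP => -[b j]; rewrite aut_blkE.
exists g; first exact/TgrpP.
by rewrite /swaps -/x -/y gx gy eqxx.
Qed.

Lemma Tgrp_fix2 t k : t \in Tgrp F -> ~~ swaps t k -> ~~ swaps t (k + 1) -> t = 1%g.
Proof.
case/TgrpP => _ At /negPn/eqP tx /negPn/eqP ty.
set x : RV n := (false, inZn k) in tx; set y : RV n := (false, inZn (k + 1)) in ty.
have [f fl] := edge_flag (setU11 x [set y]) (redges_adj (cadj_succ k : radj x y)).
have te : t @: [set x; y] = [set x; y] by rewrite imsetU1 imset_set1 tx ty.
have [tf | tf] := eqVneq (face_img t f) f.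
  apply: (fixes_flag_at_trivial (x := x) At); exists [set x; y], f.
  by split; rewrite // /flag_act /= tx te tf.
(* Otherwise t maps a flag to the flag differing from it only in the face. *)
case: classF => _ _ _ /(_ (x, [set x; y], f) (flag_act t (x, [set x; y], f))) [] //.
- exact: is_flag_act.
- by split; rewrite /= ?tx ?te 1?eq_sym.
- by exists t.
Qed.

Lemma aut_reflection k : exists2 g, g \in AutF &
  [/\ blk g (inZn k) = inZn (k + 3), blk g (inZn (k + 1)) = inZn (k + 2),
      blk g (inZn (k + 2)) = inZn (k + 1) & blk g (inZn (k + 3)) = inZn k].
Proof.
set x : RV n := (false, inZn (k + 1)); set y : RV n := (false, inZn (k + 2)).
have xy : radj x y by have := cadj_succ (k + 1); rewrite -addnA.
have [f fl] := edge_flag (setU11 x [set y]) (redges_adj xy).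
have fl' : is_flag F (y, [set x; y], f) by case: fl; split; rewrite // !inE eqxx orbT.
have x_y : x != y by apply: contraTneq xy => ->; rewrite radj_irr.
have [_ diff0_orbit _ _] := classF.
have [g Ag [gx ge _]] := diff0_orbit _ _ fl fl' (And3 x_y erefl erefl).
have gy : g y = x.
  have : g y \in [set x; y] by rewrite -{1}ge imset_f // !inE eqxx orbT.
  rewrite !inE => /orP[/eqP // | /eqP gyy].
  by move: x_y; rewrite -(inj_eq (@perm_inj _ g)) gx gyy eqxx.
have g1 : blk g (inZn (k + 1)) = inZn (k + 2) by rewrite /blk -/x gx.
have g2 : blk g (inZn (k + 2)) = inZn (k + 1) by rewrite /blk -/y gy.
exists g => //; split=> //.
- case: (blk_nbrs (k := k) (i := k + 1) Ag _) => [|[_ g2'] | [-> _]]; rewrite -?addnA //.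
  by move: (inZnD2_neq (k + 1)); rewrite -g2' g2 eqxx.
- case: (blk_nbrs (k := k + 1) (i := k) Ag _) => [|[g1' _] | [_ g3]].
  + by rewrite -addnA.
  + by move: (inZnD2_neq k); rewrite -g1 g1' eqxx.
  + by rewrite -addnA in g3.
Qed.

Lemma Tgrp_swaps2_inj t t' k : t \in Tgrp F -> t' \in Tgrp F ->
  swaps t k = swaps t' k -> swaps t (k + 1) = swaps t' (k + 1) -> t = t'.
Proof.
move=> tT t'T tt'k tt'k1; have [[tN _] [t'N _]] := (TgrpP _ tT, TgrpP _ t'T).
have tt'1 : (t * t')%g = 1%g.
  by apply: (Tgrp_fix2 (k := k)); rewrite ?groupM // swapsM // ?tt'k ?tt'k1 addbb.
apply: Ngrp_swaps_inj => // m; have := swaps1 m.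
by rewrite -tt'1 swapsM //; case: (swaps t m); case: (swaps t' m).
Qed.

Lemma Tgrp_swaps_next t k : t \in Tgrp F -> t != 1%g -> ~~ swaps t k -> swaps t (k + 1).
Proof. by move=> tT nt tk; apply: contraNT nt => tk1; rewrite (Tgrp_fix2 tT tk tk1). Qed.

Lemma Tgrp_swaps_prev t k : t \in Tgrp F -> t != 1%g -> ~~ swaps t (k + 1) -> swaps t k.
Proof. by move=> tT nt tk1; apply: contraNT nt => tk; rewrite (Tgrp_fix2 tT tk tk1). Qed.

Lemma Tgrp_fix_uniq t t' k : t \in Tgrp F -> t' \in Tgrp F -> t != 1%g -> t' != 1%g ->
  ~~ swaps t k -> ~~ swaps t' k -> t = t'.
Proof.
move=> tT t'T nt nt' tk t'k; apply: (Tgrp_swaps2_inj (k := k)) => //.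
  by rewrite (negbTE tk) (negbTE t'k).
by rewrite !Tgrp_swaps_next.
Qed.

Lemma Tgrp_eq4 a b : a \in Tgrp F -> b \in Tgrp F -> ~~ swaps a 0 -> swaps a 1 ->
  swaps b 0 -> ~~ swaps b 1 -> Tgrp F = [set 1%g; a; b; (a * b)%g].
Proof.
move=> aT bT a0 a1 b0 b1; have [[aN _] [bN _]] := (TgrpP _ aT, TgrpP _ bT).
apply/setP => t; rewrite !in_setU !in_set1 -!orbA.
apply/idP/idP => [tT | /or4P[] /eqP-> //]; last exact: groupM.
apply/or4P; have [t0|t0] := boolP (swaps t 0); have [t1|t1] := boolP (swaps t 1);
  [constructor 4 | constructor 3 | constructor 2 | constructor 1]; apply/eqP;
  apply: (Tgrp_swaps2_inj (k := 0)); rewrite ?groupM ?swapsM ?swaps1 //;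
  by rewrite ?(negbTE t0) ?(negbTE t1) ?(negbTE a0) ?(negbTE b1) ?t0 ?t1 ?a1 ?b0.
Qed.

Definition fix_gap2 k :=
  [exists t in Tgrp F, [&& t != 1%g, ~~ swaps t k & ~~ swaps t (k + 2)]].

Lemma fix_gap2S k : fix_gap2 (k + 1) = fix_gap2 k.
Proof.
have [g Ag [gk gk1 gk2 gk3]] := aut_reflection k.
have gT t : t \in Tgrp F -> (t ^ g^-1)%g \in Tgrp F by move=> tT; rewrite Tgrp_conj ?groupV.
have g_sw t m : t \in Tgrp F -> swaps (t ^ g^-1)%g m = swaps t (blk g (inZn m)).
  by case/TgrpP => tN _; apply: swaps_conj.
apply/existsP/existsP => -[t /and4P[tT nt t0 t2]]; exists (t ^ g^-1)%g;
  rewrite gT // conjg_eq1 nt /= !g_sw // -?addnA ?gk ?gk1 ?gk2 ?gk3 !swaps_inZn.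
  by rewrite -addnA in t2; rewrite t0 t2.
by rewrite t0 t2.
Qed.

Lemma fix_gap2E k : fix_gap2 k = fix_gap2 0.
Proof. by elim: k => // k IHk; rewrite -addn1 fix_gap2S. Qed.

Lemma swaps_alternate t r : fix_gap2 0 -> t \in Tgrp F -> t != 1%g -> ~~ swaps t r ->
  forall k, swaps t (r + k) = odd k.
Proof.
move=> gap tT nt tr.
have fix_even m : ~~ swaps t (r + 2 * m).
  elim: m => [|m IHm]; first by rewrite muln0 addn0.
  have /existsP[t' /and4P[t'T nt' t'0 t'2]] : fix_gap2 (r + 2 * m) by rewrite fix_gap2E.
  by rewrite (Tgrp_fix_uniq tT t'T nt nt' IHm t'0) mulnS addnCA addnC.
move=> k; rewrite -[in LHS](odd_double_half k) -mul2n.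
case: (odd k) => /=; last by rewrite add0n; apply/negbTE.
by rewrite addnCA addnC Tgrp_swaps_next.
Qed.

Lemma swaps_gap2 t k : ~~ fix_gap2 0 -> t \in Tgrp F -> t != 1%g -> ~~ swaps t k ->
  swaps t (k + 2).
Proof.
move=> nogap tT nt tk; apply: contraNT nogap => tk2.
by rewrite -(fix_gap2E k); apply/existsP; exists t; rewrite tT nt tk.
Qed.

Lemma swaps_fix3 t k : ~~ fix_gap2 0 -> t \in Tgrp F -> t != 1%g -> ~~ swaps t k ->
  ~~ swaps t (k + 3).
Proof.
move=> nogap tT nt tk.
(* With t' fixing u_(k+1) and swapping u_(k+2), t * t' fixes u_(k+2), hence swaps
   u_(k+3); as t' swaps u_(k+3), t fixes it. *)
have [t' t'T /andP[t'1 t'2]] := Tgrp_swaps_succ (k + 1).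
have nt' := swaps_neq1 t'2.
have [[tN _] [t'N _]] := (TgrpP _ tT, TgrpP _ t'T).
have sT : (t * t')%g \in Tgrp F by rewrite groupM.
have s0 : swaps (t * t')%g k by rewrite swapsM // (negbTE tk) (Tgrp_swaps_prev t'T nt' t'1).
have ns := swaps_neq1 s0.
have s2 : ~~ swaps (t * t')%g (k + 2).
  by rewrite swapsM // (swaps_gap2 nogap tT nt tk) -addnA in t'2 *; rewrite t'2.
have := Tgrp_swaps_next sT ns s2; rewrite swapsM // -addnA.
by rewrite (_ : 2 + 1 = 1 + 2) // addnA (swaps_gap2 nogap t'T nt' t'1) addbT -addnA.
Qed.

Lemma swaps_period3 t r : ~~ fix_gap2 0 -> t \in Tgrp F -> t != 1%g -> ~~ swaps t r ->
  forall k, swaps t (r + k) = (k %% 3 != 0).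
Proof.
move=> nogap tT nt tr.
have fix3 m : ~~ swaps t (r + 3 * m).
  by elim: m => [|m IHm]; rewrite ?muln0 ?addn0 // mulnS addnCA addnC swaps_fix3.
move=> k; rewrite {1}(divn_eq k 3) addnA mulnC.
have : k %% 3 < 3 := ltn_pmod k (isT : 0 < 3).
case: (k %% 3) => [|[|[|//]]] _.
- by rewrite addn0; apply/negbTE.
- exact: Tgrp_swaps_next tT nt (fix3 _).
- exact: swaps_gap2 nogap tT nt (fix3 _).
Qed.

Lemma Tgrp_alternating : fix_gap2 0 ->
  Tgrp F = [set tuple_elt (fun _ => false); tuple_elt (fun j : 'I_n => odd (val j));
                tuple_elt (fun j : 'I_n => ~~ odd (val j)); tuple_elt (fun _ => true)]
  /\ 2 %| n.
Proof.
move=> gap.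
have [a aT /andP[a0 a1]] := Tgrp_swaps_succ 0.
have [b bT /andP[b1 b2]] := Tgrp_swaps_succ 1.
have [na nb] := (swaps_neq1 a1, swaps_neq1 b2).
have b0 := Tgrp_swaps_prev (k := 0) bT nb b1.
have sa k : swaps a k = odd k by rewrite -[k]add0n swaps_alternate.
have sb k : swaps b k = ~~ odd k.
  by case: k => // k; rewrite -add1n swaps_alternate // add1n /= negbK.
split; last by rewrite dvdn2 -sa -[n]add0n swapsDn.
have [[aN _] [bN _]] := (TgrpP _ aT, TgrpP _ bT).
rewrite (Tgrp_eq4 aT bT a0 a1 b0 b1); congr [set _; _; _; _]; symmetry;
  apply: tuple_elt_swaps => [|j]; rewrite ?groupM ?swaps1 ?swapsM ?sa ?sb //.
by case: (odd j).
Qed.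

Lemma Tgrp_period3 : ~~ fix_gap2 0 ->
  Tgrp F = [set tuple_elt (fun _ => false); tuple_elt (fun j : 'I_n => val j %% 3 != 0);
                tuple_elt (fun j : 'I_n => val j %% 3 != 1);
                tuple_elt (fun j : 'I_n => val j %% 3 != 2)] /\ 3 %| n.
Proof.
move=> nogap.
have [a aT /andP[a0 a1]] := Tgrp_swaps_succ 0.
have [b bT /andP[b1 b2]] := Tgrp_swaps_succ 1.
have [na nb] := (swaps_neq1 a1, swaps_neq1 b2).
have b0 := Tgrp_swaps_prev (k := 0) bT nb b1.
have sa k : swaps a k = (k %% 3 != 0) by rewrite -[k]add0n swaps_period3.
have sb k : swaps b k = (k %% 3 != 1).
  case: k => // k; rewrite -add1n swaps_period3 // addnC -modnDml.
  by case: (k %% 3) (ltn_pmod k (isT : 0 < 3)) => [|[|[|]]].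
split; last by apply/negbNE; rewrite -sa -[n]add0n swapsDn.
have [[aN _] [bN _]] := (TgrpP _ aT, TgrpP _ bT).
rewrite (Tgrp_eq4 aT bT a0 a1 b0 b1); congr [set _; _; _; _]; symmetry;
  apply: tuple_elt_swaps => [|j]; rewrite ?groupM ?swaps1 ?swapsM ?sa ?sb //.
by case: (j %% 3) (ltn_pmod j (isT : 0 < 3)) => [|[|[|]]].
Qed.

End Maps.
End RoseWindowMaps.

Theorem lemma3p1 (n : nat) (F : {set {set {set RV n}}}) :
  3 <= n -> n != 4 -> is_map F -> class2_01 F ->
  ((Tgrp F = [set tuple_elt (fun _ => false);
                  tuple_elt (fun j : 'I_n => val j %% 3 != 0);
                  tuple_elt (fun j : 'I_n => val j %% 3 != 1);
                  tuple_elt (fun j : 'I_n => val j %% 3 != 2)] /\ 3 %| n)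
   \/
   (Tgrp F = [set tuple_elt (fun _ => false);
                  tuple_elt (fun j : 'I_n => odd (val j));
                  tuple_elt (fun j : 'I_n => ~~ odd (val j));
                  tuple_elt (fun _ => true)] /\ 2 %| n))
  /\ gcdn n 6 != 1.
Proof.
move=> n_gt2 n_neq4 mapF classF.
have [gap | nogap] := boolP (fix_gap2 n_gt2 F 0).
  have [-> n2] := Tgrp_alternating n_neq4 mapF classF gap.
  split; first by right.
  by apply: contraTneq (_ : 2 %| gcdn n 6) => [->|]; rewrite ?dvdn_gcd ?n2.
have [-> n3] := Tgrp_period3 n_neq4 mapF classF nogap.
split; first by left.
by apply: contraTneq (_ : 3 %| gcdn n 6) => [->|]; rewrite ?dvdn_gcd ?n3.
Qed.
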